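(* Let $\ell\in\{\ell_{lin},\ell_{log}\}$ and let $L_f$ be the strong smoothness constant of $f$ defined below. (i) If $\beta^*$ is an $\alpha$-stationary point of (SCL) for some $\alpha>0$, then $\beta^*$ is a local minimizer of (SCL); if moreover $\|\beta_1^*\|_0<s_1$ and $\|\beta_2^*\|_0<s_2$, then $\beta^*$ is a global minimizer of (SCL). (ii) Conversely, if $\beta^*$ is a global minimizer of (SCL), then $\beta^*$ is an $\alpha$-stationary point of (SCL) for every $0<\alpha<1/L_f$.
   Context: Data: $X\in\mathbb{R}^{n\times p_1}$, $Z\in\mathbb{R}^{n\times p_2}$ with rows $x_i,z_i$; $y\in\mathbb{R}^n$ ($y\in\{0,1\}^n$ for $\ell_{log}$); $a,b,c>0$; integers $1\le s_j\le p_j$. Losses $\ell_{lin}(\beta;X,y)=\frac12\sum_i(y_i-\langle x_i,\beta\rangle)^2$, $\ell_{log}(\beta;X,y)=\sum_i(\log(1+\exp\langle x_i,\beta\rangle)-y_i\langle x_i,\beta\rangle)$. Objective $f(\beta)=\frac1n[a\ell(\beta_1;X,y)+b\ell(\beta_2;Z,y)+\frac c2\|X\beta_1-Z\beta_2\|^2]$, $\beta=(\beta_1;\beta_2)$. (SCL): minimize $f$ subject to $\|\beta_1\|_0\le s_1,\|\beta_2\|_0\le s_2$; $\Sigma_j=\{v\in\mathbb{R}^{p_j}:\|v\|_0\le s_j\}$. Local minimizer: feasible point minimizing $f$ over feasible points in a neighborhood. $\Pi_{\Sigma_j}(w)=\arg\min_{u\in\Sigma_j}\|w-u\|$ (set-valued).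 $\beta^*$ is $\alpha$-stationary if $\beta_j^*\in\Pi_{\Sigma_j}(\beta_j^*-\alpha\nabla_jf(\beta^* ))$, $j=1,2$, where $\nabla_j f$ is the gradient in $\beta_j$. Constant $L_f$: for $\ell_{log}$, $L_f=\lambda_{\max}\big(\frac1n\begin{bmatrix}(a/4+c)X^\top X&-cX^\top Z\\-cZ^\top X&(b/4+c)Z^\top Z\end{bmatrix}\big)$; for $\ell_{lin}$, $L_f=\lambda_{\max}\big(\frac1n\begin{bmatrix}(a+c)X^\top X&-cX^\top Z\\-cZ^\top X&(b+c)Z^\top Z\end{bmatrix}\big)$. *)

From HB Require Import structures.
From mathcomp Require Import all_boot all_order all_algebra.
From mathcomp Require Import all_classical all_reals all_analysis.
Set Implicit Arguments. Unset Strict Implicit. Unset Printing Implicit Defensive.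
Import Order.TTheory GRing.Theory Num.Theory.
Import numFieldNormedType.Exports.
Local Open Scope ring_scope.

Section SCL.
Variable R : realType.

Inductive loss_kind := Llin | Llog.

Definition l0 p (v : 'cV[R]_p) : nat := #|[set i : 'I_p | v i 0 != 0]|.

Definition enorm p (v : 'cV[R]_p) : R := Num.sqrt (\sum_(i < p) v i 0 ^+ 2).

Definition Sigma p (s : nat) (v : 'cV[R]_p) : Prop := (l0 v <= s)%N.

Definition inProj p (s : nat) (w u : 'cV[R]_p) : Prop :=
  Sigma s u /\ forall v, Sigma s v -> enorm (w - u) <= enorm (w - v).

Definition ell n p (l : loss_kind) (b : 'cV[R]_p) (A : 'M[R]_(n, p)) (y : 'cV[R]_n) : R :=
  match l with
  | Llin => 2^-1 * \sum_(i < n) (y i 0 - (A *m b) i 0) ^+ 2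
  | Llog => \sum_(i < n) (ln (1 + expR ((A *m b) i 0)) - y i 0 * (A *m b) i 0)
  end.

Definition fobj n p1 p2 (l : loss_kind) (X : 'M[R]_(n, p1)) (Z : 'M[R]_(n, p2))
  (y : 'cV[R]_n) (a b c : R) (b1 : 'cV[R]_p1) (b2 : 'cV[R]_p2) : R :=
  (n%:R)^-1 * (a * ell l b1 X y + b * ell l b2 Z y
               + c / 2 * enorm (X *m b1 - Z *m b2) ^+ 2).

Definition grad p (F : 'cV[R]_p -> R) (x : 'cV[R]_p) : 'cV[R]_p :=
  \col_(k < p) derive1 (fun t : R => F (x + t *: delta_mx k 0)) 0.

Definition grad1 n p1 p2 l X Z y a b c (b1 : 'cV[R]_p1) (b2 : 'cV[R]_p2) : 'cV[R]_p1 :=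
  grad (fun u => @fobj n p1 p2 l X Z y a b c u b2) b1.
Definition grad2 n p1 p2 l X Z y a b c (b1 : 'cV[R]_p1) (b2 : 'cV[R]_p2) : 'cV[R]_p2 :=
  grad (fun u => @fobj n p1 p2 l X Z y a b c b1 u) b2.

Definition feasible p1 p2 s1 s2 (b1 : 'cV[R]_p1) (b2 : 'cV[R]_p2) : Prop :=
  Sigma s1 b1 /\ Sigma s2 b2.

Definition alpha_stationary n p1 p2 l X Z y a b c s1 s2 (alpha : R)
  (b1 : 'cV[R]_p1) (b2 : 'cV[R]_p2) : Prop :=
  inProj s1 (b1 - alpha *: @grad1 n p1 p2 l X Z y a b c b1 b2) b1 /\
  inProj s2 (b2 - alpha *: @grad2 n p1 p2 l X Z y a b c b1 b2) b2.

Definition local_min n p1 p2 l X Z y a b c s1 s2 (b1 : 'cV[R]_p1) (b2 : 'cV[R]_p2) : Prop :=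
  feasible s1 s2 b1 b2 /\
  exists eps : R, 0 < eps /\
    forall u1 u2, feasible s1 s2 u1 u2 ->
      Num.sqrt (enorm (u1 - b1) ^+ 2 + enorm (u2 - b2) ^+ 2) < eps ->
      @fobj n p1 p2 l X Z y a b c b1 b2 <= fobj l X Z y a b c u1 u2.

Definition global_min n p1 p2 l X Z y a b c s1 s2 (b1 : 'cV[R]_p1) (b2 : 'cV[R]_p2) : Prop :=
  feasible s1 s2 b1 b2 /\
  forall u1 u2, feasible s1 s2 u1 u2 ->
      @fobj n p1 p2 l X Z y a b c b1 b2 <= fobj l X Z y a b c u1 u2.

(* the matrix whose largest eigenvalue is L_f *)
Definition Lmat n p1 p2 l (X : 'M[R]_(n, p1)) (Z : 'M[R]_(n, p2)) (a b c : R)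
  : 'M[R]_(p1 + p2) :=
  let ka := match l with Llin => a | Llog => a / 4 end in
  let kb := match l with Llin => b | Llog => b / 4 end in
  (n%:R)^-1 *: block_mx ((ka + c) *: (X^T *m X)) (- c *: (X^T *m Z))
                        (- c *: (Z^T *m X)) ((kb + c) *: (Z^T *m Z)).

Definition is_lambda_max m (M : 'M[R]_m) (lam : R) : Prop :=
  eigenvalue M lam /\ forall mu, eigenvalue M mu -> mu <= lam.

End SCL.

From HB Require Import structures.
From mathcomp Require Import all_boot all_order all_algebra.
From mathcomp Require Import all_classical all_reals all_analysis.
From mathcomp Require Import ring lra.
Set Implicit Arguments. Unset Strict Implicit. Unset Printing Implicit Defensive.
Import Order.TTheory GRing.Theory Num.Theory.
Import numFieldNormedType.Exports.
Local Open Scope ring_scope.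

(* Each per-sample loss h is convex and h' is 1-Lipschitz (linear loss) or
   1/4-Lipschitz (logistic loss: sigmoid' <= 1/4).  Hence f satisfies the
   first-order convexity inequality, and in each block the descent inequality
     f(u1, b2) <= f(b1, b2) + <grad1 f, d> + (a kappa + c) |X d|^2 / (2 n),
   whose quadratic form is a diagonal block of [Lmat], hence at most Lf |d|^2 / 2
   by the Rayleigh quotient.
   (i) If b_j is a projection of b_j - alpha grad_j f onto Sigma_j, then grad_j f
   vanishes on supp b_j, and everywhere when ||b_j||_0 < s_j.  Feasible points
   close to b contain its support, so both linear terms of the convexity
   inequality vanish.
   (ii) At a global minimizer, a sparse point strictly closer to
   b_j - alpha grad_j f than b_j would, by the descent inequality and
   alpha Lf < 1, have a smaller objective value. *)

Section RealDerivative.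
Variables (R : realType) (F F' : R -> R).
Hypothesis dF : forall t, is_derive t (1 : R) F (F' t).

Let derivableF t : derivable F t 1. Proof. by case: (dF t). Qed.
Let derive1F t : (F^`())%classic t = F' t. Proof. by rewrite derive1E; case: (dF t) => _ ->. Qed.
Let continuousF : continuous F.
Proof. by move=> t; exact/differentiable_continuous/derivable1_diffP. Qed.

Lemma derive_le0_nincr : (forall t, F' t <= 0) -> {homo F : s t /~ s <= t}.
Proof.
move=> F'le0 s t ts.
apply: (@ler0_derive1_le_cc _ F t s); rewrite ?in_itv /= ?lexx ?ts //.
- by move=> x _; rewrite derive1F.
- exact/continuous_subspaceT.
Qed.

Lemma derive_sign_change_min s :
  (forall t, s <= t -> 0 <= F' t) -> (forall t, t <= s -> F' t <= 0) ->
  forall t, F s <= F t.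
Proof.
move=> F'ge0 F'le0 t; have [st|/ltW ts] := leP s t.
- apply: (@ger0_derive1_le_cc _ F s t); rewrite ?in_itv /= ?lexx ?st //.
  + by move=> x; rewrite in_itv /= derive1F => /andP[sx _]; apply/F'ge0/ltW.
  + exact/continuous_subspaceT.
- apply: (@ler0_derive1_le_cc _ F t s); rewrite ?in_itv /= ?lexx ?ts //.
  + by move=> x; rewrite in_itv /= derive1F => /andP[_ xs]; apply/F'le0/ltW.
  + exact/continuous_subspaceT.
Qed.

End RealDerivative.

Section SampleLoss.
Variable R : realType.

Definition sigmoid (s : R) : R := 1 - (1 + expR s)^-1.

Definition sample_loss (l : loss_kind) (yi s : R) : R :=
  match l with Llin => 2^-1 * (yi - s) ^+ 2 | Llog => ln (1 + expR s) - yi * s end.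

Definition sample_loss' (l : loss_kind) (yi s : R) : R :=
  match l with Llin => s - yi | Llog => sigmoid s - yi end.

Definition smoothness (l : loss_kind) : R := match l with Llin => 1 | Llog => 4^-1 end.

Lemma onepexpR_gt0 (t : R) : 0 < 1 + expR t.
Proof. by rewrite addr_gt0 ?expR_gt0. Qed.

Lemma is_derive_onepexpR (t : R) : is_derive t (1 : R) (fun t => 1 + expR t) (expR t).
Proof. by apply: is_derive_eq; rewrite add0r mul1r. Qed.

Lemma is_derive_softplus (t : R) :
  is_derive t (1 : R) (fun t => ln (1 + expR t)) (sigmoid t).
Proof.
have dln : is_derive (1 + expR t) (1 : R) (@ln R) (1 + expR t)^-1.
  by apply: is_derive1_ln; rewrite onepexpR_gt0.
have := is_derive1_comp (g := fun t => 1 + expR t) dln (is_derive_onepexpR t).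
move=> dcomp; apply: (is_derive_eq dcomp).
by rewrite /sigmoid; field; rewrite lt0r_neq0 ?onepexpR_gt0.
Qed.

Lemma sigmoid_le : {homo sigmoid : s t / s <= t}.
Proof.
move=> s t st; rewrite /sigmoid lerD2l lerN2 lef_pV2 ?posrE ?onepexpR_gt0 //.
by rewrite lerD2l ler_expR.
Qed.

Lemma sigmoid_sub_quarter_nincr : {homo (fun t => sigmoid t - t / 4) : s t /~ s <= t}.
Proof.
apply: (derive_le0_nincr (F' := fun t => expR t / (1 + expR t) ^+ 2 - 4^-1)).
  move=> t; apply: is_derive_eq; rewrite /GRing.scale /=.
  by field; rewrite lt0r_neq0 ?onepexpR_gt0.
move=> t; rewrite subr_le0 -subr_ge0.
have -> : 4^-1 - expR t / (1 + expR t) ^+ 2 = (1 - expR t) ^+ 2 / (4 * (1 + expR t) ^+ 2).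
  by field; rewrite lt0r_neq0 ?onepexpR_gt0.
by rewrite divr_ge0 ?sqr_ge0 // mulr_ge0 ?sqr_ge0.
Qed.

Lemma is_derive_sample_loss l yi t :
  is_derive t (1 : R) (sample_loss l yi) (sample_loss' l yi t).
Proof.
case: l => /=.
  change (is_derive t 1 (fun s => 2^-1 * (yi - s) ^+ 2) (t - yi)).
  by apply: is_derive_eq; rewrite /GRing.scale /=; field.
change (is_derive t 1 (fun s => ln (1 + expR s) - yi * s) (sigmoid t - yi)).
have := is_derive_softplus t => dsp.
by apply: is_derive_eq; rewrite /GRing.scale /= mulr1.
Qed.

Lemma sample_loss_tangent_le l yi s t :
  sample_loss l yi s + sample_loss' l yi s * (t - s) <= sample_loss l yi t.
Proof.
case: l.
  rewrite -subr_ge0 /=.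
  have -> : 2^-1 * (yi - t) ^+ 2 - (2^-1 * (yi - s) ^+ 2 + (s - yi) * (t - s))
     = 2^-1 * (t - s) ^+ 2 by field.
  by rewrite mulr_ge0 ?sqr_ge0 // invr_ge0.
set d := sample_loss' Llog yi s.
have : sample_loss Llog yi s - d * (s - s) <= sample_loss Llog yi t - d * (t - s).
  apply: (@derive_sign_change_min _ (fun u => sample_loss Llog yi u - d * (u - s))
                                     (fun u => sample_loss' Llog yi u - d)).
  - move=> u; have := is_derive_sample_loss Llog yi u => dl.
    by apply: is_derive_eq; rewrite /GRing.scale /=; field.
  - by move=> u su; rewrite subr_ge0 lerD2r sigmoid_le.
  - by move=> u us; rewrite subr_le0 lerD2r sigmoid_le.
by rewrite subrr mulr0 subr0; lra.
Qed.

Lemma sample_loss_le_quadratic l yi s t :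
  sample_loss l yi t <=
    sample_loss l yi s + sample_loss' l yi s * (t - s) + smoothness l / 2 * (t - s) ^+ 2.
Proof.
case: l.
  rewrite /= -subr_ge0.
  have -> : 2^-1 * (yi - s) ^+ 2 + (s - yi) * (t - s) + 1 / 2 * (t - s) ^+ 2
            - 2^-1 * (yi - t) ^+ 2 = 0 by field.
  exact: lexx.
set d := sample_loss' Llog yi s.
pose F u := d * (u - s) + 8^-1 * (u - s) ^+ 2 - sample_loss Llog yi u.
have : F s <= F t.
  apply: (@derive_sign_change_min _ F (fun u => d + 4^-1 * (u - s) - sample_loss' Llog yi u)).
  - move=> u; have := is_derive_sample_loss Llog yi u => dl.
    by apply: is_derive_eq; rewrite /GRing.scale /=; field.
  - by move=> u su; have := sigmoid_sub_quarter_nincr su; rewrite /d /=; lra.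
  - by move=> u us; have := sigmoid_sub_quarter_nincr us; rewrite /d /=; lra.
by rewrite /F subrr mulr0 expr0n /= mulr0 add0r /=; lra.
Qed.

End SampleLoss.
Arguments smoothness {R} l.

Section Gradient.
Variables (R : realType) (n p : nat) (A : 'M[R]_(n, p)).

Definition vdot (g d : 'cV[R]_p) : R := \sum_k g k 0 * d k 0.

Lemma mulmx_delta_entry (v : 'cV[R]_p) k (t : R) i :
  (A *m (v + t *: delta_mx k 0)) i 0 = (A *m v) i 0 + t * A i k.
Proof.
rewrite mulmxDr -scalemxAr [LHS]mxE [X in _ + X]mxE; congr (_ + _ * _).
rewrite mxE (bigD1 k) //= big1 ?addr0; first by rewrite mxE !eqxx mulr1.
by move=> j /negbTE nj; rewrite mxE nj mulr0.
Qed.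

Lemma mulmxB_entry (u v : 'cV[R]_p) i : (A *m (u - v)) i 0 = (A *m u) i 0 - (A *m v) i 0.
Proof. by rewrite mulmxBr [LHS]mxE [X in _ + X]mxE. Qed.

Lemma grad_sum_comp (phi phi' : 'I_n -> R -> R) (r : R) (v : 'cV[R]_p) :
  (forall i t, is_derive t (1 : R) (phi i) (phi' i t)) ->
  grad (fun u => r * \sum_i phi i ((A *m u) i 0)) v =
  \col_j (r * \sum_i phi' i ((A *m v) i 0) * A i j).
Proof.
move=> dphi; apply/matrixP => j o; rewrite (ord1 o) !mxE.
under eq_fun do under eq_bigr do rewrite mulmx_delta_entry.
have dline i : is_derive (0 : R) (1 : R) (fun t => phi i ((A *m v) i 0 + t * A i j))
                 (phi' i ((A *m v) i 0) * A i j).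
  have dlin : is_derive (0 : R) (1 : R) (fun t => (A *m v) i 0 + t * A i j) (A i j).
    by apply: is_derive_eq; rewrite /GRing.scale /=; ring.
  have := @is_derive1_comp R (phi i) _ 0 _ _ _ dlin.
  by rewrite mul0r addr0; apply.
have := is_deriveZ r (is_derive_sum dline); rewrite fct_sumE.
by rewrite derive1E => -[_ ->].
Qed.

Lemma vdot_col_sum (h : 'I_n -> R) (r : R) (d : 'cV[R]_p) :
  vdot (\col_j (r * \sum_i h i * A i j)) d = r * \sum_i h i * (A *m d) i 0.
Proof.
rewrite /vdot; under eq_bigr do rewrite mxE big_distrr /= big_distrl /=.
rewrite exchange_big /= big_distrr /=; apply: eq_bigr => i _.
by rewrite mxE big_distrr /= big_distrr /=; apply: eq_bigr => j _; ring.
Qed.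

End Gradient.

Section Objective.
Variables (R : realType) (l : loss_kind) (a b c : R).

Definition pair_loss (yi s z : R) : R :=
  a * sample_loss l yi s + b * sample_loss l yi z + c / 2 * (s - z) ^+ 2.

Definition pair_loss_d1 (yi s z : R) : R := a * sample_loss' l yi s + c * (s - z).

Lemma is_derive_pair_loss_d1 yi z t :
  is_derive t (1 : R) (fun s => pair_loss yi s z) (pair_loss_d1 yi t z).
Proof.
have := is_derive_sample_loss l yi t => dl.
by apply: is_derive_eq; rewrite /GRing.scale /= /pair_loss_d1; field.
Qed.

Variables (n p1 p2 : nat) (X : 'M[R]_(n, p1)) (Z : 'M[R]_(n, p2)) (y : 'cV[R]_n).

Lemma ellE p (A : 'M[R]_(n, p)) v :
  ell l v A y = \sum_i sample_loss l (y i 0) ((A *m v) i 0).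
Proof. by case: l; rewrite //= mulr_sumr. Qed.

Lemma fobjE u1 u2 : fobj l X Z y a b c u1 u2 =
  n%:R^-1 * \sum_i pair_loss (y i 0) ((X *m u1) i 0) ((Z *m u2) i 0).
Proof.
rewrite /fobj !ellE /enorm sqr_sqrtr ?sumr_ge0 // => [|i _]; last exact: sqr_ge0.
rewrite /pair_loss !big_split /= -!mulr_sumr.
by congr (_ * (_ + _ * _)); apply: eq_bigr => i _; rewrite !mxE.
Qed.

Lemma grad1E u1 u2 : grad1 l X Z y a b c u1 u2 =
  \col_j (n%:R^-1 * \sum_i pair_loss_d1 (y i 0) ((X *m u1) i 0) ((Z *m u2) i 0) * X i j).
Proof.
rewrite /grad1; have -> : (fun u => fobj l X Z y a b c u u2) =
          (fun u => n%:R^-1 * \sum_i pair_loss (y i 0) ((X *m u) i 0) ((Z *m u2) i 0)).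
  by apply/funext => u; rewrite fobjE.
apply: (@grad_sum_comp _ _ _ X (fun i s => pair_loss (y i 0) s ((Z *m u2) i 0))
                               (fun i s => pair_loss_d1 (y i 0) s ((Z *m u2) i 0))).
by move=> i t; exact: is_derive_pair_loss_d1.
Qed.

End Objective.

Section ObjectiveSwap.
Variables (R : realType) (l : loss_kind) (n p1 p2 : nat).
Variables (X : 'M[R]_(n, p1)) (Z : 'M[R]_(n, p2)) (y : 'cV[R]_n) (a b c : R).

Lemma fobj_swap u1 u2 : fobj l X Z y a b c u1 u2 = fobj l Z X y b a c u2 u1.
Proof.
rewrite !fobjE; congr (_ * _); apply: eq_bigr => i _.
by rewrite /pair_loss; ring.
Qed.

Lemma grad2_swap u1 u2 : grad2 l X Z y a b c u1 u2 = grad1 l Z X y b a c u2 u1.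
Proof.
rewrite /grad2 /grad1.
by have -> : (fun u => fobj l X Z y a b c u1 u) = (fun u => fobj l Z X y b a c u u1)
  by apply/funext => u; exact: fobj_swap.
Qed.

End ObjectiveSwap.

Section FirstOrderBounds.
Variables (R : realType) (l : loss_kind) (a b c : R).
Hypotheses (ha : 0 <= a) (hb : 0 <= b) (hc : 0 <= c).

Lemma pair_loss_tangent_le yi s z s' z' :
  pair_loss l a b c yi s z + pair_loss_d1 l a c yi s z * (s' - s)
    + pair_loss_d1 l b c yi z s * (z' - z) <= pair_loss l a b c yi s' z'.
Proof.
have hs := sample_loss_tangent_le l yi s s'; have hz := sample_loss_tangent_le l yi z z'.
rewrite -subr_ge0 /pair_loss /pair_loss_d1.
have -> : a * sample_loss l yi s' + b * sample_loss l yi z' + c / 2 * (s' - z') ^+ 2 -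
    (a * sample_loss l yi s + b * sample_loss l yi z + c / 2 * (s - z) ^+ 2 +
     (a * sample_loss' l yi s + c * (s - z)) * (s' - s) +
     (b * sample_loss' l yi z + c * (z - s)) * (z' - z)) =
  a * (sample_loss l yi s' - (sample_loss l yi s + sample_loss' l yi s * (s' - s)))
  + b * (sample_loss l yi z' - (sample_loss l yi z + sample_loss' l yi z * (z' - z)))
  + c / 2 * ((s' - z') - (s - z)) ^+ 2 by field.
by rewrite !addr_ge0 // mulr_ge0 ?divr_ge0 ?sqr_ge0 ?subr_ge0.
Qed.

Lemma pair_loss_le_quadratic yi s z s' :
  pair_loss l a b c yi s' z <= pair_loss l a b c yi s z
    + pair_loss_d1 l a c yi s z * (s' - s) + (a * smoothness l + c) / 2 * (s' - s) ^+ 2.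
Proof.
have hs := sample_loss_le_quadratic l yi s s'.
rewrite -subr_ge0 /pair_loss /pair_loss_d1.
have -> : a * sample_loss l yi s + b * sample_loss l yi z + c / 2 * (s - z) ^+ 2 +
    (a * sample_loss' l yi s + c * (s - z)) * (s' - s) +
    (a * smoothness l + c) / 2 * (s' - s) ^+ 2 -
    (a * sample_loss l yi s' + b * sample_loss l yi z + c / 2 * (s' - z) ^+ 2) =
  a * (sample_loss l yi s + sample_loss' l yi s * (s' - s)
       + smoothness l / 2 * (s' - s) ^+ 2 - sample_loss l yi s') by field.
by rewrite mulr_ge0 ?subr_ge0.
Qed.

Variables (n p1 p2 : nat) (X : 'M[R]_(n, p1)) (Z : 'M[R]_(n, p2)) (y : 'cV[R]_n).
Local Notation f := (fobj l X Z y a b c).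
Local Notation grad1 := (grad1 l X Z y a b c).
Local Notation grad2 := (grad2 l X Z y a b c).

Lemma ninv_ge0 : 0 <= n%:R^-1 :> R.
Proof. by rewrite invr_ge0 ler0n. Qed.

Lemma fobj_tangent_le b1 b2 u1 u2 :
  f b1 b2 + vdot (grad1 b1 b2) (u1 - b1) + vdot (grad2 b1 b2) (u2 - b2) <= f u1 u2.
Proof.
rewrite grad2_swap !grad1E !vdot_col_sum !fobjE -!mulrDr ler_wpM2l ?ninv_ge0 //.
rewrite -!big_split ler_sum // => i _; rewrite !mulmxB_entry.
exact: pair_loss_tangent_le.
Qed.

Lemma fobj_le_quadratic1 b1 b2 u1 :
  f u1 b2 <= f b1 b2 + vdot (grad1 b1 b2) (u1 - b1)
    + 2^-1 * (n%:R^-1 * (a * smoothness l + c) * \sum_i (X *m (u1 - b1)) i 0 ^+ 2).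
Proof.
rewrite grad1E vdot_col_sum !fobjE.
have -> : 2^-1 * (n%:R^-1 * (a * smoothness l + c) * \sum_i (X *m (u1 - b1)) i 0 ^+ 2)
    = n%:R^-1 * \sum_i ((a * smoothness l + c) / 2 * (X *m (u1 - b1)) i 0 ^+ 2).
  by rewrite -mulr_sumr; ring.
rewrite -!mulrDr ler_wpM2l ?ninv_ge0 // -!big_split ler_sum // => i _.
by rewrite mulmxB_entry; exact: pair_loss_le_quadratic.
Qed.

End FirstOrderBounds.

Lemma fobj_le_quadratic2 (R : realType) l (a b c : R) n p1 p2 (X : 'M[R]_(n, p1))
    (Z : 'M[R]_(n, p2)) y b1 b2 u2 :
  0 <= b -> 0 <= c ->
  fobj l X Z y a b c b1 u2 <= fobj l X Z y a b c b1 b2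
    + vdot (grad2 l X Z y a b c b1 b2) (u2 - b2)
    + 2^-1 * (n%:R^-1 * (b * smoothness l + c) * \sum_i (Z *m (u2 - b2)) i 0 ^+ 2).
Proof.
by move=> hb hc; rewrite grad2_swap !(fobj_swap _ X) fobj_le_quadratic1.
Qed.

Lemma quad_le0_linear_coef_eq0 (R : realFieldType) (A C : R) :
  0 <= A -> (forall t, 2 * t * A + t ^+ 2 * C <= 0) -> A = 0.
Proof.
move=> A0 H; pose k : R := `|C| + 1.
have k0 : 0 < k by rewrite ltr_wpDl.
have pos : 0 < 2 * k + C.
  have := ler_norm (- C); have := normr_ge0 C; rewrite normrN /k; lra.
have := H (A / k).
have -> : 2 * (A / k) * A + (A / k) ^+ 2 * C = (A / k) ^+ 2 * (2 * k + C).
  by field; rewrite gt_eqF.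
rewrite pmulr_lle0 // => le0.
have : A / k == 0 by rewrite -sqrf_eq0 eq_le le0 sqr_ge0.
by rewrite mulf_eq0 invr_eq0 (gt_eqF k0) orbF => /eqP.
Qed.

Section Rayleigh.
Variables (R : realType) (m : nat).
Local Open Scope classical_set_scope.

Definition rdot (u v : 'rV[R]_m) : R := (u *m v^T) 0 0.

Definition qform (M : 'M[R]_m) (v : 'rV[R]_m) : R := rdot (v *m M) v.

Lemma rdotC u v : rdot u v = rdot v u.
Proof. by rewrite /rdot -[u *m v^T]trmxK trmx_mul trmxK mxE. Qed.

Lemma rdotDl u u' v : rdot (u + u') v = rdot u v + rdot u' v.
Proof. by rewrite /rdot mulmxDl mxE. Qed.

Lemma rdotBl u u' v : rdot (u - u') v = rdot u v - rdot u' v.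
Proof. by rewrite /rdot mulmxBl [LHS]mxE [X in _ + X]mxE. Qed.

Lemma rdotZl t u v : rdot (t *: u) v = t * rdot u v.
Proof. by rewrite /rdot -scalemxAl mxE. Qed.

Lemma rdotDr u v v' : rdot u (v + v') = rdot u v + rdot u v'.
Proof. by rewrite rdotC rdotDl !(rdotC _ u). Qed.

Lemma rdotZr t u v : rdot u (t *: v) = t * rdot u v.
Proof. by rewrite rdotC rdotZl rdotC. Qed.

Lemma rdot_sym_mx (M : 'M[R]_m) u v : M^T = M -> rdot (u *m M) v = rdot (v *m M) u.
Proof. by move=> sM; rewrite [RHS]rdotC /rdot trmx_mul sM mulmxA. Qed.

Lemma rdotE u v : rdot u v = \sum_j u 0 j * v 0 j.
Proof. by rewrite /rdot mxE; apply: eq_bigr => j _; rewrite mxE. Qed.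

Lemma rdot_ge0 v : 0 <= rdot v v.
Proof. by rewrite rdotE sumr_ge0 // => j _; rewrite -expr2 sqr_ge0. Qed.

Lemma rdot_eq0 v : rdot v v = 0 -> v = 0.
Proof.
rewrite rdotE => /eqP; rewrite psumr_eq0 => [/allP vj0|j _]; last first.
  by rewrite -expr2 sqr_ge0.
apply/rowP => j; have := vj0 j (mem_index_enum j).
by rewrite /= -expr2 sqrf_eq0 mxE => /eqP.
Qed.

Lemma qform_continuous (M : 'M[R]_m) : continuous (qform M).
Proof.
have -> : qform M = fun w => \sum_j (\sum_i w 0 i * M i j) * w 0 j.
  by apply/funext => w; rewrite /qform rdotE; apply: eq_bigr => j _; rewrite mxE.
apply: continuous_big => [|j _ w]; first exact: add_continuous.
apply: continuousM; last exact: coord_continuous.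
apply: continuous_big => [|i _ w']; first exact: add_continuous.
by apply: continuousM; [exact: coord_continuous | exact: cst_continuous].
Qed.

Lemma unit_sphere_compact : compact [set w : 'rV[R]_m | rdot w w = 1].
Proof.
apply: (@subclosed_compact _ _ [set v : 'rV[R]_m | forall j, `[-1, 1] (v ord0 j)]).
- have -> : [set w : 'rV[R]_m | rdot w w = 1] = qform 1%:M @^-1` [set x | x = 1].
    by apply/seteqP; split => w /=; rewrite /qform mulmx1.
  apply: preimage_closed; last exact: closed_eq.
  by move=> w _; exact: qform_continuous.
- exact: (@rV_compact R _ (fun _ => `[-1, 1]) (fun _ => @segment_compact R (-1) 1)).
- move=> w /= w1 j; rewrite in_itv /=.
  have : w 0 j ^+ 2 <= 1.
    rewrite -w1 rdotE (bigD1 j) //= -expr2 lerDl sumr_ge0 // => i _.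
    by rewrite -expr2 sqr_ge0.
  by move=> h; apply/andP; split; nra.
Qed.

Lemma qformZ (M : 'M[R]_m) t v : qform M (t *: v) = t ^+ 2 * qform M v.
Proof. by rewrite /qform -scalemxAl rdotZl rdotZr mulrA -expr2. Qed.

Lemma rayleigh_max_exists (M : 'M[R]_m) : (0 < m)%N ->
  exists2 w0, rdot w0 w0 = 1 & forall w, qform M w <= qform M w0 * rdot w w.
Proof.
move=> m0; pose S := [set w : 'rV[R]_m | rdot w w = 1].
have S0 : S !=set0.
  exists (delta_mx 0 (Ordinal m0)); rewrite /S /= rdotE (bigD1 (Ordinal m0)) //=.
  rewrite big1 ?mxE ?eqxx ?addr0 ?mulr1 // => j /negbTE nj.
  by rewrite mxE nj andbF mul0r.
have [w0 /[!inE] w01 w0max] := compact_EVT_max S0 unit_sphere_compact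
  (continuous_subspaceT (@qform_continuous M)).
exists w0 => // w; have [/rdot_eq0 ->|wn0] := eqVneq (rdot w w) 0.
  by rewrite /qform /rdot !mul0mx !mxE mulr0.
have wpos : 0 < rdot w w by rewrite lt0r wn0 rdot_ge0.
pose k := Num.sqrt (rdot w w).
have k0 : 0 < k by rewrite sqrtr_gt0.
have kk : k ^+ 2 = rdot w w by rewrite sqr_sqrtr // ltW.
have /w0max : k^-1 *: w \in S.
  by rewrite inE /S /= rdotZl rdotZr mulrA -expr2 exprVn kk mulVf.
rewrite qformZ exprVn kk -(ler_pM2l wpos) mulrA mulfV ?mul1r //.
by rewrite mulrC.
Qed.

Lemma rayleigh_max_eigenvector (M : 'M[R]_m) w0 : M^T = M -> rdot w0 w0 = 1 ->
  (forall w, qform M w <= qform M w0 * rdot w w) -> w0 *m M = qform M w0 *: w0.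
Proof.
move=> sM w01 w0max; set lam := qform M w0.
have [r rE] : {r | r = w0 *m M - lam *: w0} by exists (w0 *m M - lam *: w0).
have rr : rdot r r = rdot (w0 *m M) r - lam * rdot w0 r by rewrite {1}rE rdotBl rdotZl.
have line t : 2 * t * rdot r r + t ^+ 2 * (qform M r - lam * rdot r r) <= 0.
  have := w0max (w0 + t *: r).
  rewrite /qform mulmxDl -scalemxAl !rdotDl !rdotDr !rdotZl !rdotZr.
  rewrite (rdot_sym_mx r w0 sM) (rdotC r w0) w01 -/(qform M w0) -/(qform M r) -/lam.
  by rewrite rr => h; nra.
have /rdot_eq0 r0 := quad_le0_linear_coef_eq0 (rdot_ge0 r) line.
by apply/eqP; rewrite -subr_eq0 -rE r0.
Qed.

Lemma qform_le_lambda_max (M : 'M[R]_m) L : M^T = M -> is_lambda_max M L ->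
  forall v, qform M v <= L * rdot v v.
Proof.
move=> sM [_ Lmax] v; case: (posnP m) => [m0|m0].
  by rewrite /qform !rdotE !big1 ?mulr0 // => j; move: (ltn_ord j); rewrite {2}m0.
have [w0 w01 w0max] := rayleigh_max_exists M m0.
apply: le_trans (w0max v) _; rewrite ler_wpM2r ?rdot_ge0 //.
apply/Lmax/eigenvalueP; exists w0; first exact: rayleigh_max_eigenvector.
by apply/eqP => w00; move: w01; rewrite w00 /rdot mul0mx mxE => /esym/eqP; rewrite oner_eq0.
Qed.

End Rayleigh.

Section SmoothnessMatrix.
Variables (R : realType) (n p1 p2 : nat) (l : loss_kind).
Variables (X : 'M[R]_(n, p1)) (Z : 'M[R]_(n, p2)) (a b c : R).
Local Notation M := (Lmat l X Z a b c).

Lemma Lmat_sym : M^T = M.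
Proof. by rewrite /Lmat linearZ /= tr_block_mx !linearZ /= !trmx_mul !trmxK. Qed.

Lemma qform_gram p (A : 'M[R]_(n, p)) (d : 'cV[R]_p) :
  (d^T *m (A^T *m A) *m d) 0 0 = \sum_i (A *m d) i 0 ^+ 2.
Proof.
rewrite mulmxA -trmx_mul -mulmxA mxE; apply: eq_bigr => i _.
by rewrite mxE expr2.
Qed.

Lemma qform_Lmat_top (d : 'cV[R]_p1) :
  qform M (col_mx d 0)^T = n%:R^-1 * (a * smoothness l + c) * \sum_i (X *m d) i 0 ^+ 2.
Proof.
rewrite /qform /rdot trmxK /Lmat tr_col_mx trmx0 -scalemxAr -scalemxAl mxE.
rewrite mul_row_block mul_row_col !mul0mx !addr0 mulmx0 addr0.
rewrite -scalemxAr -scalemxAl mxE qform_gram mulrA.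
by case: l; rewrite /= ?mulr1.
Qed.

Lemma qform_Lmat_bottom (d : 'cV[R]_p2) :
  qform M (col_mx 0 d)^T = n%:R^-1 * (b * smoothness l + c) * \sum_i (Z *m d) i 0 ^+ 2.
Proof.
rewrite /qform /rdot trmxK /Lmat tr_col_mx trmx0 -scalemxAr -scalemxAl mxE.
rewrite mul_row_block mul_row_col !mul0mx !add0r mulmx0 add0r.
rewrite -scalemxAr -scalemxAl mxE qform_gram mulrA.
by case: l; rewrite /= ?mulr1.
Qed.

End SmoothnessMatrix.

Lemma rdot_col_mx (R : realType) p q (d1 : 'cV[R]_p) (d2 : 'cV[R]_q) :
  rdot (col_mx d1 d2)^T (col_mx d1 d2)^T = \sum_k d1 k 0 ^+ 2 + \sum_k d2 k 0 ^+ 2.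
Proof.
rewrite rdotE big_split_ord /=; congr (_ + _); apply: eq_bigr => k _.
  by rewrite -expr2 mxE col_mxEu.
by rewrite -expr2 mxE col_mxEd.
Qed.

Section Sparse.
Variables (R : realType) (p s : nat).
Implicit Types (u v g : 'cV[R]_p).

Definition supp v : {set 'I_p} := [set k | v k 0 != 0].

Lemma ler_enorm u v : (enorm u <= enorm v) = (\sum_k u k 0 ^+ 2 <= \sum_k v k 0 ^+ 2).
Proof. by rewrite ler_sqrt // sumr_ge0 // => k _; rewrite sqr_ge0. Qed.

Lemma coord_le_enorm v k : `|v k 0| <= enorm v.
Proof.
have sq_ge0 j : 0 <= v j 0 ^+ 2 by rewrite sqr_ge0.
rewrite -sqrtr_sqr ler_sqrt ?sumr_ge0 // (bigD1 k) //= lerDl.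
by rewrite sumr_ge0.
Qed.

Lemma stationary_grad_eq0 alpha v g i : 0 < alpha ->
  inProj s (v - alpha *: g) v -> (#|i |: supp v| <= s)%N -> g i 0 = 0.
Proof.
move=> alpha0 [_ vproj] hi; apply/eqP; apply: contraT => gi.
pose w := v - alpha *: g.
have [u uE] : {u : 'cV[R]_p | forall k, u k 0 = if k == i then w i 0 else v k 0}.
  by exists (\col_k (if k == i then w i 0 else v k 0)) => k; rewrite mxE.
have su : Sigma s u.
  apply: leq_trans hi; apply: subset_leq_card; apply/fintype.subsetP => k.
  by rewrite !inE uE; case: (eqVneq k i).
have := vproj u su; rewrite ler_enorm leNgt => /negbTE <-.
rewrite (bigD1 i) //= [ltRHS](bigD1 i) //=.
have -> : \sum_(k | k != i) (w - u) k 0 ^+ 2 = \sum_(k | k != i) (w - v) k 0 ^+ 2.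
  by apply: eq_bigr => k /negbTE ki; rewrite !mxE uE ki.
rewrite ltrD2r !mxE uE eqxx /w !mxE subrr expr0n /= addrAC subrr add0r sqrrN.
by rewrite exprn_even_gt0 //= mulf_neq0 // gt_eqF.
Qed.

Lemma vdot_grad_eq0 g u v :
  (forall i, (#|i |: supp v| <= s)%N -> g i 0 = 0) ->
  Sigma s u -> supp v \subset supp u -> vdot g (u - v) = 0.
Proof.
move=> g0 su vu; apply: big1 => k _; have [ku|ku] := boolP (k \in supp u).
  rewrite g0 ?mul0r //; apply: leq_trans su; apply: subset_leq_card.
  by rewrite finset.subUset finset.sub1set ku vu.
have : k \notin supp v by apply: contra ku; exact: (fintype.subsetP vu).
by move: ku; rewrite !inE !negbK !mxE => /eqP -> /eqP ->; rewrite subrr mulr0.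
Qed.

(* Equals [1] when [v = 0]. *)
Definition min_abs_nz v : R := \big[Num.min/1]_(k | v k 0 != 0) `|v k 0|.

Lemma min_abs_nz_gt0 v : 0 < min_abs_nz v.
Proof. by apply: lt_bigmin => // k vk; rewrite normr_gt0. Qed.

Lemma supp_subset_near u v : enorm (u - v) < min_abs_nz v -> supp v \subset supp u.
Proof.
move=> near; apply/fintype.subsetP => k; rewrite !inE => vk.
apply: contraTneq near => uk; rewrite -leNgt.
apply: le_trans (bigmin_le_cond 1 (fun k => `|v k 0|) vk) _.
by have := coord_le_enorm (u - v) k; rewrite !mxE uk add0r normrN.
Qed.

Lemma inProj_of_min (F : 'cV[R]_p -> R) g v alpha L :
  0 < alpha -> alpha * L < 1 -> Sigma s v -> (forall u, Sigma s u -> F v <= F u) ->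
  (forall u, F u <= F v + vdot g (u - v) + 2^-1 * (L * \sum_k (u - v) k 0 ^+ 2)) ->
  inProj s (v - alpha *: g) v.
Proof.
move=> alpha0 alphaL sv vmin descent; split => // u su.
rewrite ler_enorm; set d := u - v.
have -> : \sum_k (v - alpha *: g - u) k 0 ^+ 2 =
    \sum_k d k 0 ^+ 2 + 2 * alpha * vdot g d + alpha ^+ 2 * \sum_k g k 0 ^+ 2.
  rewrite /vdot !mulr_sumr -!big_split /=; apply: eq_bigr => k _; rewrite /d !mxE; ring.
have -> : \sum_k (v - alpha *: g - v) k 0 ^+ 2 = alpha ^+ 2 * \sum_k g k 0 ^+ 2.
  by rewrite mulr_sumr; apply: eq_bigr => k _; rewrite !mxE; ring.
have d2 : 0 <= \sum_k d k 0 ^+ 2 by rewrite sumr_ge0 // => k _; rewrite sqr_ge0.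
have := descent u; have := vmin u su; rewrite -/d => Fvu Fu.
have lin : 0 <= 2 * vdot g d + L * \sum_k d k 0 ^+ 2 by lra.
have := mulr_ge0 (ltW alpha0) lin.
have : 0 <= (1 - alpha * L) * \sum_k d k 0 ^+ 2 by rewrite mulr_ge0 // subr_ge0 ltW.
lra.
Qed.

End Sparse.

Lemma ler_sqrtDr (R : rcfType) (x y : R) : 0 <= y -> x <= Num.sqrt (x ^+ 2 + y).
Proof.
move=> y0; apply: le_trans (ler_norm x) _.
by rewrite -sqrtr_sqr ler_sqrt ?lerDl // addr_ge0 ?sqr_ge0.
Qed.

Section Theorem3p4.
Variables (R : realType) (n p1 p2 s1 s2 : nat) (l : loss_kind).
Variables (X : 'M[R]_(n, p1)) (Z : 'M[R]_(n, p2)) (y : 'cV[R]_n) (a b c : R).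
Hypotheses (ha : 0 <= a) (hb : 0 <= b) (hc : 0 <= c).
Local Notation f := (fobj l X Z y a b c).

Lemma stationary_local_min alpha b1 b2 : 0 < alpha ->
  alpha_stationary l X Z y a b c s1 s2 alpha b1 b2 -> local_min l X Z y a b c s1 s2 b1 b2.
Proof.
move=> alpha0 [st1 st2]; split; first by split; [case: st1 | case: st2].
exists (Num.min (min_abs_nz b1) (min_abs_nz b2)).
split=> [|u1 u2 [su1 su2]]; first by rewrite lt_min !min_abs_nz_gt0.
rewrite lt_min => /andP[near1 near2].
have supp1 : supp b1 \subset supp u1.
  exact/supp_subset_near/(le_lt_trans _ near1)/ler_sqrtDr/sqr_ge0.
have supp2 : supp b2 \subset supp u2.
  apply/supp_subset_near/(le_lt_trans _ near2).
  by rewrite [X in Num.sqrt X]addrC ler_sqrtDr ?sqr_ge0.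
have := fobj_tangent_le l ha hb hc X Z y b1 b2 u1 u2.
rewrite (vdot_grad_eq0 _ su1 supp1) ?(vdot_grad_eq0 _ su2 supp2) ?addr0 // => i.
- exact: stationary_grad_eq0 alpha0 st2.
- exact: stationary_grad_eq0 alpha0 st1.
Qed.

Lemma stationary_global_min alpha b1 b2 : 0 < alpha ->
  alpha_stationary l X Z y a b c s1 s2 alpha b1 b2 ->
  (l0 b1 < s1)%N -> (l0 b2 < s2)%N -> global_min l X Z y a b c s1 s2 b1 b2.
Proof.
move=> alpha0 [st1 st2] lt1 lt2; split; first by split; [case: st1 | case: st2].
have small p s (v : 'cV[R]_p) i : (l0 v < s)%N -> (#|i |: supp v| <= s)%N.
  by move=> lt; rewrite cardsU1; apply: leq_trans lt; rewrite -add1n leq_add2r leq_b1.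
move=> u1 u2 _; have := fobj_tangent_le l ha hb hc X Z y b1 b2 u1 u2.
rewrite /vdot !big1 ?addr0 // => k _.
- by rewrite (stationary_grad_eq0 alpha0 st2 (small _ _ _ _ lt2)) mul0r.
- by rewrite (stationary_grad_eq0 alpha0 st1 (small _ _ _ _ lt1)) mul0r.
Qed.

Variable Lf : R.
Hypothesis hLf : is_lambda_max (Lmat l X Z a b c) Lf.

Lemma smoothness_le_lambda_max1 (d : 'cV[R]_p1) :
  n%:R^-1 * (a * smoothness l + c) * \sum_i (X *m d) i 0 ^+ 2 <= Lf * \sum_k d k 0 ^+ 2.
Proof.
have := qform_le_lambda_max (Lmat_sym l X Z a b c) hLf (col_mx d 0)^T.
rewrite qform_Lmat_top rdot_col_mx.
suff -> : \sum_k (0 : 'cV[R]_p2) k 0 ^+ 2 = 0 by rewrite addr0.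
by rewrite big1 // => k _; rewrite mxE expr0n.
Qed.

Lemma smoothness_le_lambda_max2 (d : 'cV[R]_p2) :
  n%:R^-1 * (b * smoothness l + c) * \sum_i (Z *m d) i 0 ^+ 2 <= Lf * \sum_k d k 0 ^+ 2.
Proof.
have := qform_le_lambda_max (Lmat_sym l X Z a b c) hLf (col_mx 0 d)^T.
rewrite qform_Lmat_bottom rdot_col_mx.
suff -> : \sum_k (0 : 'cV[R]_p1) k 0 ^+ 2 = 0 by rewrite add0r.
by rewrite big1 // => k _; rewrite mxE expr0n.
Qed.

Lemma global_min_stationary alpha b1 b2 :
  global_min l X Z y a b c s1 s2 b1 b2 -> 0 < alpha -> alpha * Lf < 1 ->
  alpha_stationary l X Z y a b c s1 s2 alpha b1 b2.
Proof.
move=> [[sb1 sb2] bmin] alpha0 alphaL; split.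
- apply: (@inProj_of_min _ _ _ (f^~ b2) _ _ _ _ alpha0 alphaL sb1) => [u su|u].
    exact: bmin.
  apply: le_trans (fobj_le_quadratic1 l b c ha X Z y b1 b2 u) _.
  rewrite lerD2l ler_wpM2l ?invr_ge0 //.
  exact: smoothness_le_lambda_max1.
- apply: (@inProj_of_min _ _ _ (f b1) _ _ _ _ alpha0 alphaL sb2) => [u su|u].
    exact: bmin.
  apply: le_trans (fobj_le_quadratic2 l a X Z y b1 b2 u hb hc) _.
  rewrite lerD2l ler_wpM2l ?invr_ge0 //.
  exact: smoothness_le_lambda_max2.
Qed.

End Theorem3p4.

Theorem theorem3p4 (R : realType) (n p1 p2 s1 s2 : nat) (l : loss_kind)
  (X : 'M[R]_(n, p1)) (Z : 'M[R]_(n, p2)) (y : 'cV[R]_n) (a b c : R)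
  (Lf : R)
  (hn : (0 < n)%N) (ha : 0 < a) (hb : 0 < b) (hc : 0 < c)
  (hs1 : (1 <= s1 <= p1)%N) (hs2 : (1 <= s2 <= p2)%N)
  (hy : l = Llog -> forall i, y i 0 = 0 \/ y i 0 = 1)
  (hLf : is_lambda_max (Lmat l X Z a b c) Lf) :
  (forall (alpha : R) (b1 : 'cV[R]_p1) (b2 : 'cV[R]_p2), 0 < alpha ->
     alpha_stationary l X Z y a b c s1 s2 alpha b1 b2 ->
     local_min l X Z y a b c s1 s2 b1 b2 /\
     ((l0 b1 < s1)%N -> (l0 b2 < s2)%N -> global_min l X Z y a b c s1 s2 b1 b2))
  /\
  (forall (b1 : 'cV[R]_p1) (b2 : 'cV[R]_p2),
     global_min l X Z y a b c s1 s2 b1 b2 ->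
     forall alpha : R, 0 < alpha -> alpha * Lf < 1 ->
       alpha_stationary l X Z y a b c s1 s2 alpha b1 b2).
Proof.
have [a0 b0 c0] := And3 (ltW ha) (ltW hb) (ltW hc).
split=> [alpha b1 b2 alpha0 st | b1 b2 bmin alpha alpha0 alphaL].
  split; first exact: (stationary_local_min (R := R) a0 b0 c0 alpha0 st).
  exact: (stationary_global_min (R := R) a0 b0 c0 alpha0 st).
exact: (global_min_stationary (R := R) a0 b0 c0 hLf bmin alpha0 alphaL).
Qed.
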